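(* Let $m\geq 2$, $\mathcal M=\{1,\dots,m\}$, $X_{\mathcal M}=(X_1,\dots,X_m)$ a discrete memoryless multiple source with finite alphabets, and $\mathcal A\subseteq\mathcal M$ with $|\mathcal A|\geq 2$. For every $R_{\mathcal M}\in\mathscr R(\mathcal A)$ and all $\mathcal B_1,\mathcal B_2\subseteq\mathcal M$ with $\mathcal B_1\cup\mathcal B_2\in\mathscr B(\mathcal A)$: if $\mathrm{SW}(R_{\mathcal M},\mathcal B_1)=0$ and $\mathrm{SW}(R_{\mathcal M},\mathcal B_2)=0$, then $\mathrm{SW}(R_{\mathcal M},\mathcal B_1\cup\mathcal B_2)=0$ and $\mathrm{SW}(R_{\mathcal M},\mathcal B_1\cap\mathcal B_2)=0$.
   Context: Define $\mathscr B(\mathcal A):=\{\mathcal B\subsetneq\mathcal M:\ \mathcal B\neq\emptyset,\ \mathcal B\not\supseteq\mathcal A\}$. Let $h(\mathcal B):=H(X_{\mathcal B}\mid X_{\mathcal B^c})$ for $\mathcal B\subseteq\mathcal M$ (complements in $\mathcal M$; in particular $h(\emptyset)=0$). For $R_{\mathcal M}=(R_1,\dots,R_m)\in\mathbb R^m$ and $\mathcal B\subseteq\mathcal M$ let $\mathrm{SW}(R_{\mathcal M},\mathcal B):=\sum_{j\in\mathcal B}R_j-h(\mathcal B)$, and $\mathscr R(\mathcal A):=\{R_{\mathcal M}\in\mathbb R^m:\ \mathrm{SW}(R_{\mathcal M},\mathcal B)\geq 0\ \forall\,\mathcal B\in\mathscr B(\mathcal A)\}$. *)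

From HB Require Import structures.
From mathcomp Require Import all_boot all_order all_algebra.
From mathcomp Require Import reals exp.
Set Implicit Arguments. Unset Strict Implicit. Unset Printing Implicit Defensive.
Import Order.TTheory GRing.Theory Num.Theory.
Local Open Scope ring_scope.

(* Terminals M = {1..m} are modelled as 'I_m; source X_i takes values in the
   finite alphabet T i.  A (single-letter) joint pmf of X_M is a function on
   the product alphabet. *)
Definition outcome (m : nat) (T : 'I_m -> finType) := {dffun forall i, T i}.

Definition is_pmf (R : realType) (m : nat) (T : 'I_m -> finType)
  (P : outcome T -> R) : Prop :=
  (forall x, 0 <= P x) /\ \sum_x P x = 1.

Definition marg (R : realType) (m : nat) (T : 'I_m -> finType)
  (P : outcome T -> R) (S : {set 'I_m}) (x : outcome T) : R :=
  \sum_(y : outcome T | [forall i in S, y i == x i]) P y.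

Definition cond_entropy (R : realType) (m : nat) (T : 'I_m -> finType)
  (P : outcome T -> R) (B C : {set 'I_m}) : R :=
  - \sum_x P x * ln (marg P (B :|: C) x / marg P C x).

Definition h (R : realType) (m : nat) (T : 'I_m -> finType)
  (P : outcome T -> R) (B : {set 'I_m}) : R :=
  cond_entropy P B (~: B).

Definition SW (R : realType) (m : nat) (T : 'I_m -> finType)
  (P : outcome T -> R) (Rt : 'I_m -> R) (B : {set 'I_m}) : R :=
  \sum_(j in B) Rt j - h P B.

Definition scrB (m : nat) (A : {set 'I_m}) : pred {set 'I_m} :=
  [pred B : {set 'I_m} | (B \proper [set: 'I_m]) && (B != set0) && ~~ (A \subset B)].

Definition scrR (R : realType) (m : nat) (T : 'I_m -> finType)
  (P : outcome T -> R) (A : {set 'I_m}) (Rt : 'I_m -> R) : Prop :=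
  forall B, B \in scrB A -> 0 <= SW P Rt B.

(* Write L(S) := sum_x P(x) ln P_S(x); then h(B) = L(B^c) - L(M).  The key
   fact is that L is supermodular (Shannon's submodularity of entropy):
   applying ln t <= t - 1 to t = P_C1 P_C2 / (P_{C1 n C2} P_{C1 u C2}) reduces
   it to the bound sum_x P(x) t(x) <= 1, which follows by expanding P_C1 and
   P_C2 as sums.  Hence h is supermodular and SW is submodular, so
   SW(B1 u B2) + SW(B1 n B2) <= SW(B1) + SW(B2) = 0; both terms are
   nonnegative, since B1 n B2 is empty or belongs to scrB(A) with B1 u B2. *)
From HB Require Import structures.
From mathcomp Require Import all_boot all_order all_algebra.
From mathcomp Require Import reals exp.
From mathcomp Require Import ring lra.
Import Order.TTheory GRing.Theory Num.Theory.
Local Open Scope ring_scope.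

Set Implicit Arguments.
Unset Strict Implicit.

Definition agree (m : nat) (T : 'I_m -> finType) (S : {set 'I_m})
  (x y : outcome T) : bool :=
  [forall i in S, x i == y i].

Lemma agreeP (m : nat) (T : 'I_m -> finType) (S : {set 'I_m}) (x y : outcome T) :
  reflect {in S, forall i, x i = y i} (agree S x y).
Proof.
apply: (iffP forallP) => [H i iS | H i]; first by move: (H i); rewrite iS => /eqP.
by apply/implyP => /H ->.
Qed.

Lemma agree_sym (m : nat) (T : 'I_m -> finType) (S : {set 'I_m}) (x y : outcome T) :
  agree S x y = agree S y x.
Proof. by apply/agreeP/agreeP => H i iS; rewrite H. Qed.

Section MeanLogMarginal.
Variables (R : realType) (m : nat) (T : 'I_m -> finType) (P : outcome T -> R).
Hypothesis P_ge0 : forall x, 0 <= P x.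

Lemma margE (S : {set 'I_m}) (x : outcome T) :
  marg P S x = \sum_y (if agree S y x then P y else 0).
Proof. by rewrite /marg big_mkcond. Qed.

Lemma marg_ge0 (S : {set 'I_m}) (x : outcome T) : 0 <= marg P S x.
Proof. exact: sumr_ge0. Qed.

Lemma marg_gt0 (S : {set 'I_m}) (x : outcome T) : 0 < P x -> 0 < marg P S x.
Proof.
move=> Px_gt0; apply: lt_le_trans Px_gt0 _.
rewrite /marg (bigD1 x) /=; last by apply/forallP => i; apply/implyP.
by rewrite lerDl sumr_ge0.
Qed.

Lemma marg_agree (S : {set 'I_m}) (x y : outcome T) :
  agree S x y -> marg P S x = marg P S y.
Proof.
move=> /agreeP Sxy; apply: eq_bigl => z.
by apply/agreeP/agreeP => H i iS; rewrite H // Sxy.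
Qed.

Definition mean_log_marg (S : {set 'I_m}) : R := \sum_x P x * ln (marg P S x).

Lemma h_mean_log_marg (B : {set 'I_m}) :
  h P B = mean_log_marg (~: B) - mean_log_marg setT.
Proof.
rewrite /h /cond_entropy setUCr /mean_log_marg -sumrB -sumrN.
apply: eq_bigr => x _.
have [->|Px_neq0] := eqVneq (P x) 0; first by rewrite !mul0r subrr oppr0.
have Px_gt0 : 0 < P x by rewrite lt0r Px_neq0 P_ge0.
by rewrite ln_div ?posrE ?marg_gt0 //; ring.
Qed.

Lemma sum_agree2_div_marg_le (C1 C2 : {set 'I_m}) (y z : outcome T) :
  \sum_x (if agree C1 y x && agree C2 z x then
            P x / (marg P (C1 :&: C2) x * marg P (C1 :|: C2) x) else 0)
  <= (if agree (C1 :&: C2) y z then (marg P (C1 :&: C2) y)^-1 else 0).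
Proof.
case: ifPn => [Iyz | nIyz]; last first.
  rewrite big1 // => x _; case: ifP => // /andP[/agreeP C1yx /agreeP C2zx].
  case/negP: nIyz; apply/agreeP => i /setIP[iC1 iC2].
  by rewrite C1yx // -C2zx.
have [x0 /andP[/agreeP C1yx0 /agreeP C2zx0] | none] :=
  pickP (fun x => agree C1 y x && agree C2 z x); last first.
  by rewrite big1 ?invr_ge0 ?marg_ge0 // => x _; rewrite none.
(* every x counted agrees with x0 on C1 u C2 and with y on C1 n C2 *)
set c := (marg P (C1 :&: C2) y * marg P (C1 :|: C2) x0)^-1.
apply: (@le_trans _ _ (\sum_x (if agree (C1 :|: C2) x x0 then P x else 0) * c)).
  apply: ler_sum => x _.
  case: ifP => [/andP[/agreeP C1yx /agreeP C2zx] | _]; last first.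
    by case: ifP; rewrite ?mul0r // mulr_ge0 // invr_ge0 mulr_ge0 ?marg_ge0.
  have Uxx0 : agree (C1 :|: C2) x x0.
    by apply/agreeP => i /setUP[] iC; [rewrite -C1yx // C1yx0 | rewrite -C2zx // C2zx0].
  have Ixy : agree (C1 :&: C2) x y.
    by apply/agreeP => i /setIP[iC1 _]; rewrite C1yx.
  by rewrite Uxx0 (marg_agree Uxx0) (marg_agree Ixy).
rewrite -big_distrl -big_mkcond /= /c -/(marg P (C1 :|: C2) x0).
have [->|U_neq0] := eqVneq (marg P (C1 :|: C2) x0) 0.
  by rewrite mul0r invr_ge0 marg_ge0.
by rewrite invfM mulrA mulrC mulrA mulVf // mul1r.
Qed.

Lemma mean_marg_ratio_le (C1 C2 : {set 'I_m}) :
  \sum_x P x * (marg P C1 x * marg P C2 x /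
                (marg P (C1 :&: C2) x * marg P (C1 :|: C2) x)) <= \sum_x P x.
Proof.
set mI := marg P (C1 :&: C2); set mU := marg P (C1 :|: C2).
have expand x : P x * (marg P C1 x * marg P C2 x / (mI x * mU x)) =
    \sum_y \sum_z P y * P z *
      (if agree C1 y x && agree C2 z x then P x / (mI x * mU x) else 0).
  rewrite (margE C1) (margE C2) mulrCA -mulrA big_distrl /=.
  apply: eq_bigr => y _; rewrite big_distrl big_distrr /=; apply: eq_bigr => z _.
  by case: (agree C1 y x); case: (agree C2 z x); rewrite /= ?mul0r ?mulr0 //; ring.
rewrite (eq_bigr _ (fun x _ => expand x)) exchange_big /=.
apply: (@le_trans _ _ (\sum_y \sum_z P y * P z *
    (if agree (C1 :&: C2) y z then (mI y)^-1 else 0))).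
  apply: ler_sum => y _; rewrite exchange_big /=; apply: ler_sum => z _.
  rewrite -big_distrr /=; apply: ler_wpM2l; first exact: mulr_ge0.
  exact: sum_agree2_div_marg_le.
apply: ler_sum => y _.
have -> : \sum_z P y * P z * (if agree (C1 :&: C2) y z then (mI y)^-1 else 0)
          = P y * (mI y * (mI y)^-1).
  rewrite /mI (margE (C1 :&: C2) y) big_distrl big_distrr /=.
  by apply: eq_bigr => z _; rewrite agree_sym; case: ifP => _; rewrite ?mulr0 ?mul0r //; ring.
have [->|mI_neq0] := eqVneq (mI y) 0; first by rewrite mul0r mulr0.
by rewrite mulfV // mulr1.
Qed.

Lemma mean_log_marg_supermodular (C1 C2 : {set 'I_m}) :
  mean_log_marg C1 + mean_log_marg C2 <=
  mean_log_marg (C1 :&: C2) + mean_log_marg (C1 :|: C2).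
Proof.
rewrite -subr_ge0.
set mI := marg P (C1 :&: C2); set mU := marg P (C1 :|: C2).
set m1 := marg P C1; set m2 := marg P C2.
have -> : mean_log_marg (C1 :&: C2) + mean_log_marg (C1 :|: C2)
          - (mean_log_marg C1 + mean_log_marg C2) =
          \sum_x P x * (ln (mI x) + ln (mU x) - ln (m1 x) - ln (m2 x)).
  rewrite /mean_log_marg opprD addrA -big_split /= -!sumrB.
  by apply: eq_bigr => x _; ring.
apply: (@le_trans _ _ (\sum_x (P x - P x * (m1 x * m2 x / (mI x * mU x))))).
  by rewrite sumrB subr_ge0 mean_marg_ratio_le.
apply: ler_sum => x _.
have [->|Px_neq0] := eqVneq (P x) 0; first by rewrite !mul0r subrr.
have Px_gt0 : 0 < P x by rewrite lt0r Px_neq0 P_ge0.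
have [m1_gt0 m2_gt0] : 0 < m1 x /\ 0 < m2 x by split; apply: marg_gt0.
have [mI_gt0 mU_gt0] : 0 < mI x /\ 0 < mU x by split; apply: marg_gt0.
set t := m1 x * m2 x / (mI x * mU x).
have t_gt0 : 0 < t by rewrite divr_gt0 ?mulr_gt0.
have ln_t : ln t = ln (m1 x) + ln (m2 x) - ln (mI x) - ln (mU x).
  by rewrite ln_div ?posrE ?mulr_gt0 // !lnM ?posrE //; ring.
have ln_t_le : ln t <= t - 1.
  by have := @le_ln1Dx R (t - 1); rewrite (addrC 1) subrK; apply; lra.
rewrite -[X in X - _]mulr1 -mulrBr ler_wpM2l ?P_ge0 //.
by rewrite ln_t in ln_t_le; lra.
Qed.

End MeanLogMarginal.

Section SlepianWolfSubmodular.
Variables (R : realType) (m : nat) (T : 'I_m -> finType) (P : outcome T -> R).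
Hypothesis P_ge0 : forall x, 0 <= P x.

Lemma h_supermodular (B1 B2 : {set 'I_m}) :
  h P B1 + h P B2 <= h P (B1 :|: B2) + h P (B1 :&: B2).
Proof.
rewrite !h_mean_log_marg // setCU setCI.
by have := mean_log_marg_supermodular P_ge0 (~: B1) (~: B2); lra.
Qed.

Lemma h_set0 : h P set0 = 0.
Proof. by rewrite h_mean_log_marg // setC0 subrr. Qed.

Lemma SW_set0 (Rt : 'I_m -> R) : SW P Rt set0 = 0.
Proof. by rewrite /SW big_set0 h_set0 subrr. Qed.

Lemma sum_setU_setI (F : 'I_m -> R) (B1 B2 : {set 'I_m}) :
  \sum_(j in B1 :|: B2) F j + \sum_(j in B1 :&: B2) F j =
  \sum_(j in B1) F j + \sum_(j in B2) F j.
Proof.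
rewrite !(big_mkcond (fun j => j \in _)) -!big_split /=; apply: eq_bigr => j _.
by rewrite inE [j \in _ :&: _]inE; case: (j \in B1); case: (j \in B2); rewrite /= ?addr0 ?add0r.
Qed.

Lemma SW_submodular (Rt : 'I_m -> R) (B1 B2 : {set 'I_m}) :
  SW P Rt (B1 :|: B2) + SW P Rt (B1 :&: B2) <= SW P Rt B1 + SW P Rt B2.
Proof.
have := sum_setU_setI Rt B1 B2; have := h_supermodular B1 B2.
rewrite /SW; lra.
Qed.

End SlepianWolfSubmodular.

Lemma scrB_subset (m : nat) (A B B' : {set 'I_m}) :
  B \in scrB A -> B' \subset B -> B' != set0 -> B' \in scrB A.
Proof.
rewrite !inE => /andP[/andP[B_proper _] nAB] B'B -> /=.
rewrite (sub_proper_trans B'B B_proper) /=.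
by apply: contra nAB => AB'; apply: subset_trans AB' B'B.
Qed.

Theorem proposition2 (R : realType) (m : nat) (T : 'I_m -> finType)
  (P : outcome T -> R) (A : {set 'I_m}) (Rt : 'I_m -> R) (B1 B2 : {set 'I_m}) :
  (2 <= m)%N -> is_pmf P -> (2 <= #|A|)%N ->
  scrR P A Rt ->
  B1 :|: B2 \in scrB A ->
  SW P Rt B1 = 0 -> SW P Rt B2 = 0 ->
  SW P Rt (B1 :|: B2) = 0 /\ SW P Rt (B1 :&: B2) = 0.
Proof.
move=> _ [P_ge0 _] _ RtA UA SW1 SW2.
have SWU_ge0 : 0 <= SW P Rt (B1 :|: B2) by apply: RtA.
have SWI_ge0 : 0 <= SW P Rt (B1 :&: B2).
  have [->|I_neq0] := eqVneq (B1 :&: B2) set0; first by rewrite SW_set0.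
  apply/RtA/(scrB_subset UA) => //.
  exact: subset_trans (subsetIl _ _) (subsetUl _ _).
have := SW_submodular P_ge0 Rt B1 B2; rewrite SW1 SW2.
by split; lra.
Qed.
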